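(* Let $\mathcal A$ be a braided monoidal category, $H$ a Hopf algebra in $\mathcal A$, $C$ a coalgebra in $\mathcal A$ and $z:C\to H$ a coalgebra morphism. A right coaction $\mathrm{ad}:C\to C\otimes H$ is the right coadjoint coaction if and only if $$(1_C\otimes m_H)(\sigma_{H,C}\otimes1_H)(z\otimes\mathrm{ad})\Delta_C=(1_C\otimes z)\Delta_C .$$
   Context: The right coadjoint coaction is $(1_C\otimes m_H)(1_C\otimes S\otimes1_H)(\sigma_{H,C}\otimes1_H)(z\otimes1_C\otimes z)(1_C\otimes\Delta_C)\Delta_C:C\to C\otimes H$, where $S$ is the antipode of $H$ and $\sigma$ the braiding. A right coaction is a morphism $C\to C\otimes H$ that is coassociative and counital. *)

Set Implicit Arguments.
Set Universe Polymorphism.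

Record BraidedMonoidalCategory := {
  ob : Type;
  hom : ob -> ob -> Type;
  idm : forall A, hom A A;
  comp : forall {A B C}, hom B C -> hom A B -> hom A C;
  comp_id_l : forall A B (f : hom A B), comp (idm B) f = f;
  comp_id_r : forall A B (f : hom A B), comp f (idm A) = f;
  comp_assoc : forall A B C D (h : hom C D) (g : hom B C) (f : hom A B),
      comp h (comp g f) = comp (comp h g) f;
  tob : ob -> ob -> ob;
  tmor : forall {A B A' B'}, hom A A' -> hom B B' -> hom (tob A B) (tob A' B');
  tmor_id : forall A B, tmor (idm A) (idm B) = idm (tob A B);
  tmor_comp : forall A1 A2 A3 B1 B2 B3 (f : hom A1 A2) (f' : hom A2 A3)
      (g : hom B1 B2) (g' : hom B2 B3),
      tmor (comp f' f) (comp g' g) = comp (tmor f' g') (tmor f g);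
  unit : ob;
  assoc : forall A B C, hom (tob (tob A B) C) (tob A (tob B C));
  assoc_inv : forall A B C, hom (tob A (tob B C)) (tob (tob A B) C);
  assoc_iso1 : forall A B C, comp (assoc_inv A B C) (assoc A B C) = idm _;
  assoc_iso2 : forall A B C, comp (assoc A B C) (assoc_inv A B C) = idm _;
  assoc_nat : forall A A' B B' C C' (f : hom A A') (g : hom B B') (h : hom C C'),
      comp (assoc A' B' C') (tmor (tmor f g) h) = comp (tmor f (tmor g h)) (assoc A B C);
  lunit : forall A, hom (tob unit A) A;
  lunit_inv : forall A, hom A (tob unit A);
  lunit_iso1 : forall A, comp (lunit_inv A) (lunit A) = idm _;
  lunit_iso2 : forall A, comp (lunit A) (lunit_inv A) = idm _;
  lunit_nat : forall A A' (f : hom A A'),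
      comp (lunit A') (tmor (idm unit) f) = comp f (lunit A);
  runit : forall A, hom (tob A unit) A;
  runit_inv : forall A, hom A (tob A unit);
  runit_iso1 : forall A, comp (runit_inv A) (runit A) = idm _;
  runit_iso2 : forall A, comp (runit A) (runit_inv A) = idm _;
  runit_nat : forall A A' (f : hom A A'),
      comp (runit A') (tmor f (idm unit)) = comp f (runit A);
  pentagon : forall A B C D,
      comp (assoc A B (tob C D)) (assoc (tob A B) C D)
      = comp (tmor (idm A) (assoc B C D))
          (comp (assoc A (tob B C) D) (tmor (assoc A B C) (idm D)));
  triangle : forall A B,
      comp (tmor (idm A) (lunit B)) (assoc A unit B) = tmor (runit A) (idm B);
  braid : forall A B, hom (tob A B) (tob B A);
  braid_inv : forall A B, hom (tob B A) (tob A B);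
  braid_iso1 : forall A B, comp (braid_inv A B) (braid A B) = idm _;
  braid_iso2 : forall A B, comp (braid A B) (braid_inv A B) = idm _;
  braid_nat : forall A A' B B' (f : hom A A') (g : hom B B'),
      comp (braid A' B') (tmor f g) = comp (tmor g f) (braid A B);
  hexagon1 : forall A B C,
      comp (assoc B C A) (comp (braid A (tob B C)) (assoc A B C))
      = comp (tmor (idm B) (braid A C))
          (comp (assoc B A C) (tmor (braid A B) (idm C)));
  hexagon2 : forall A B C,
      comp (assoc_inv C A B) (comp (braid (tob A B) C) (assoc_inv A B C))
      = comp (tmor (braid A C) (idm B))
          (comp (assoc_inv A C B) (tmor (idm A) (braid B C)))
}.

Arguments hom {_} _ _.
Arguments idm {_} A.
Arguments comp {_ A B C} g f.
Arguments tob {_} A B.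
Arguments tmor {_ A B A' B'} f g.
Arguments unit {_}.
Arguments assoc {_} A B C.
Arguments assoc_inv {_} A B C.
Arguments lunit {_} A.
Arguments lunit_inv {_} A.
Arguments runit {_} A.
Arguments runit_inv {_} A.
Arguments braid {_} A B.
Arguments braid_inv {_} A B.

Declare Scope cat_scope.
Delimit Scope cat_scope with cat.
Notation "g ∘ f" := (comp g f) (at level 40, left associativity) : cat_scope.
Notation "A ⊗ B" := (tob A B) (at level 34, right associativity) : cat_scope.
Notation "f ⊗m g" := (tmor f g) (at level 35, right associativity) : cat_scope.
Open Scope cat_scope.

Section Structures.
Context {𝒜 : BraidedMonoidalCategory}.
Notation I := (@unit 𝒜).

Definition is_coalgebra {C : ob 𝒜} (Δ : hom C (C ⊗ C)) (ε : hom C I) : Prop :=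
  assoc C C C ∘ (Δ ⊗m idm C) ∘ Δ = (idm C ⊗m Δ) ∘ Δ /\
  lunit C ∘ (ε ⊗m idm C) ∘ Δ = idm C /\
  runit C ∘ (idm C ⊗m ε) ∘ Δ = idm C.

Definition is_algebra {H : ob 𝒜} (m : hom (H ⊗ H) H) (u : hom I H) : Prop :=
  m ∘ (m ⊗m idm H) = m ∘ (idm H ⊗m m) ∘ assoc H H H /\
  m ∘ (u ⊗m idm H) = lunit H /\
  m ∘ (idm H ⊗m u) = runit H.

Definition middle_swap (X Y : ob 𝒜) : hom ((X ⊗ Y) ⊗ (X ⊗ Y)) ((X ⊗ X) ⊗ (Y ⊗ Y)) :=
  assoc_inv X X (Y ⊗ Y)
  ∘ (idm X ⊗m (assoc X Y Y ∘ (braid Y X ⊗m idm Y) ∘ assoc_inv Y X Y))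
  ∘ assoc X Y (X ⊗ Y).

Definition is_bialgebra {H : ob 𝒜} (m : hom (H ⊗ H) H) (u : hom I H)
    (Δ : hom H (H ⊗ H)) (ε : hom H I) : Prop :=
  is_algebra m u /\ is_coalgebra Δ ε /\
  Δ ∘ m = (m ⊗m m) ∘ middle_swap H H ∘ (Δ ⊗m Δ) /\
  Δ ∘ u = (u ⊗m u) ∘ lunit_inv I /\
  ε ∘ m = lunit I ∘ (ε ⊗m ε) /\
  ε ∘ u = idm I.

Definition is_Hopf {H : ob 𝒜} (m : hom (H ⊗ H) H) (u : hom I H)
    (Δ : hom H (H ⊗ H)) (ε : hom H I) (S : hom H H) : Prop :=
  is_bialgebra m u Δ ε /\
  m ∘ (S ⊗m idm H) ∘ Δ = u ∘ ε /\
  m ∘ (idm H ⊗m S) ∘ Δ = u ∘ ε.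

Definition is_coalgebra_morphism {C H : ob 𝒜} (ΔC : hom C (C ⊗ C)) (εC : hom C I)
    (ΔH : hom H (H ⊗ H)) (εH : hom H I) (z : hom C H) : Prop :=
  ΔH ∘ z = (z ⊗m z) ∘ ΔC /\ εH ∘ z = εC.

Definition is_right_coaction {C H : ob 𝒜} (ΔH : hom H (H ⊗ H)) (εH : hom H I)
    (ρ : hom C (C ⊗ H)) : Prop :=
  assoc C H H ∘ (ρ ⊗m idm H) ∘ ρ = (idm C ⊗m ΔH) ∘ ρ /\
  runit C ∘ (idm C ⊗m εH) ∘ ρ = idm C.

Definition coadjoint_coaction {C H : ob 𝒜} (ΔC : hom C (C ⊗ C))
    (m : hom (H ⊗ H) H) (S : hom H H) (z : hom C H) : hom C (C ⊗ H) :=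
  (idm C ⊗m m) ∘ (idm C ⊗m (S ⊗m idm H)) ∘ assoc C H H
  ∘ (braid H C ⊗m idm H) ∘ ((z ⊗m idm C) ⊗m z) ∘ assoc_inv C C C
  ∘ (idm C ⊗m ΔC) ∘ ΔC.

End Structures.

(* The convolution monoid Hom(C, H), with product φ * ψ = m (φ ⊗ ψ) Δ_C and unit u ε_C,
   acts on Hom(C, X ⊗ H) for every object X by
     φ ▷ f = (1_X ⊗ m) (σ_{H,X} ⊗ 1_H) (φ ⊗ f) Δ_C
   (associators omitted): associativity of the action is associativity of m together with
   the hexagon and pentagon axioms, and the unit law comes from Kelly's unit coherences.
   The coadjoint coaction is (S z) ▷ (1_C ⊗ z) Δ_C, and the condition of the theorem reads
   z ▷ ad = (1_C ⊗ z) Δ_C.  Since z is a coalgebra morphism, S z is a two-sided convolution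
   inverse of z, so acting by z and by S z are mutually inverse and the two equations are
   equivalent. *)

From Stdlib Require Import Setoid.

Section CategoryLemmas.
Context {K : BraidedMonoidalCategory}.

Lemma compA {A B C D : ob K} (h : hom C D) (g : hom B C) (f : hom A B) :
  h ∘ (g ∘ f) = h ∘ g ∘ f.
Proof. apply comp_assoc. Qed.

Lemma comp1f {A B : ob K} (f : hom A B) : idm B ∘ f = f.
Proof. apply comp_id_l. Qed.

Lemma compf1 {A B : ob K} (f : hom A B) : f ∘ idm A = f.
Proof. apply comp_id_r. Qed.

Lemma tmor_idm (A B : ob K) : idm A ⊗m idm B = idm (A ⊗ B).
Proof. apply tmor_id. Qed.

Lemma comp_tmor {A1 A2 A3 B1 B2 B3 : ob K} (f : hom A1 A2) (f' : hom A2 A3)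
    (g : hom B1 B2) (g' : hom B2 B3) :
  f' ⊗m g' ∘ f ⊗m g = (f' ∘ f) ⊗m (g' ∘ g).
Proof. symmetry; apply tmor_comp. Qed.

Lemma tmor_comp1 {A1 A2 A3 B : ob K} (f : hom A1 A2) (f' : hom A2 A3) :
  (f' ∘ f) ⊗m idm B = f' ⊗m idm B ∘ f ⊗m idm B.
Proof. rewrite comp_tmor, comp1f; reflexivity. Qed.

Lemma tmor1_comp {A1 A2 A3 B : ob K} (f : hom A1 A2) (f' : hom A2 A3) :
  idm B ⊗m (f' ∘ f) = idm B ⊗m f' ∘ idm B ⊗m f.
Proof. rewrite comp_tmor, comp1f; reflexivity. Qed.

Lemma tmor_compr {A A' B B' B'' : ob K} (f : hom A A') (g : hom B' B'') (k : hom B B') :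
  f ⊗m (g ∘ k) = f ⊗m g ∘ idm A ⊗m k.
Proof. rewrite comp_tmor, compf1; reflexivity. Qed.

Lemma tmor_compr' {A A' B B' B'' : ob K} (f : hom A A') (g : hom B' B'') (k : hom B B') :
  f ⊗m (g ∘ k) = idm A' ⊗m g ∘ f ⊗m k.
Proof. rewrite comp_tmor, comp1f; reflexivity. Qed.

Lemma tmor_split {A A' B B' : ob K} (f : hom A A') (g : hom B B') :
  f ⊗m g = idm A' ⊗m g ∘ f ⊗m idm B.
Proof. rewrite comp_tmor, comp1f, compf1; reflexivity. Qed.

Lemma tmor_interchange {A A' B B' : ob K} (f : hom A A') (g : hom B B') :
  f ⊗m idm B' ∘ idm A ⊗m g = idm A' ⊗m g ∘ f ⊗m idm B.
Proof. rewrite !comp_tmor, !comp1f, !compf1; reflexivity. Qed.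

Lemma split_mono_cancel {A B C : ob K} (i : hom B C) (j : hom C B) (F G : hom A B) :
  j ∘ i = idm B -> i ∘ F = i ∘ G -> F = G.
Proof.
  intros ji e. rewrite <- (comp1f F), <- (comp1f G), <- ji, <- !compA, e. reflexivity.
Qed.

Lemma split_epi_cancel {A B C : ob K} (i : hom A B) (j : hom B A) (F G : hom B C) :
  i ∘ j = idm B -> F ∘ i = G ∘ i -> F = G.
Proof.
  intros ij e. rewrite <- (compf1 F), <- (compf1 G), <- ij, !compA, e. reflexivity.
Qed.

End CategoryLemmas.

(* [rw e] rewrites with [e : L = R] inside a composite chain: after normalising both [e] and
   the goal to left-associated composites, [L] need not be a syntactic subterm of the goal,
   only a contiguous segment of a chain. *)
Ltac normA := repeat rewrite compA.
Ltac rw e :=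
  let E := fresh in
  pose proof e as E; repeat rewrite compA in E; normA;
  lazymatch type of E with
  | @eq (@hom _ _ ?B) ?L ?R =>
      first [ rewrite E
            | let W := fresh in
              assert (W : forall D (P : hom B D), P ∘ L = P ∘ R)
                by (intros; rewrite E; reflexivity);
              repeat setoid_rewrite compA in W;
              rewrite W; clear W ]
  end; clear E; normA.
Ltac rwr e := rw (eq_sym e).

Section Coherence.
Context {K : BraidedMonoidalCategory}.
Notation I := (@unit K).

Lemma assoc_natural {A A' B B' C C' : ob K} (f : hom A A') (g : hom B B') (h : hom C C') :
  assoc A' B' C' ∘ (f ⊗m g) ⊗m h = f ⊗m g ⊗m h ∘ assoc A B C.
Proof. apply assoc_nat. Qed.

Lemma assocK (A B C : ob K) : assoc_inv A B C ∘ assoc A B C = idm _.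
Proof. apply assoc_iso1. Qed.

Lemma assoc_invK (A B C : ob K) : assoc A B C ∘ assoc_inv A B C = idm _.
Proof. apply assoc_iso2. Qed.

Lemma assoc_inv_natural {A A' B B' C C' : ob K} (f : hom A A') (g : hom B B') (h : hom C C') :
  assoc_inv A' B' C' ∘ f ⊗m g ⊗m h = (f ⊗m g) ⊗m h ∘ assoc_inv A B C.
Proof.
  rewrite <- (compf1 (assoc_inv A' B' C' ∘ _)), <- (assoc_invK A B C), !compA.
  rewrite <- (compA (assoc_inv A' B' C')), <- assoc_natural, compA, assocK, comp1f.
  reflexivity.
Qed.

Lemma braid_natural {A A' B B' : ob K} (f : hom A A') (g : hom B B') :
  braid A' B' ∘ f ⊗m g = g ⊗m f ∘ braid A B.
Proof. apply braid_nat. Qed.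

Lemma lunit_natural {A A' : ob K} (f : hom A A') : lunit A' ∘ idm I ⊗m f = f ∘ lunit A.
Proof. apply lunit_nat. Qed.

Lemma runit_natural {A A' : ob K} (f : hom A A') : runit A' ∘ f ⊗m idm I = f ∘ runit A.
Proof. apply runit_nat. Qed.

Lemma lunit_inv_natural {A A' : ob K} (f : hom A A') :
  idm I ⊗m f ∘ lunit_inv A = lunit_inv A' ∘ f.
Proof.
  apply (split_mono_cancel (lunit A') (lunit_inv A')); [apply lunit_iso1|].
  rewrite compA, lunit_natural, <- compA, lunit_iso2, compf1, compA, lunit_iso2, comp1f.
  reflexivity.
Qed.

Lemma pentagonA (A B C D : ob K) :
  assoc A B (C ⊗ D) ∘ assoc (A ⊗ B) C D =
  idm A ⊗m assoc B C D ∘ assoc A (B ⊗ C) D ∘ assoc A B C ⊗m idm D.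
Proof. rewrite pentagon, compA; reflexivity. Qed.

Lemma pentagon_inv_l (A B C D : ob K) :
  assoc_inv A B (C ⊗ D) ∘ idm A ⊗m assoc B C D =
  assoc (A ⊗ B) C D ∘ assoc_inv A B C ⊗m idm D ∘ assoc_inv A (B ⊗ C) D.
Proof.
  apply (split_mono_cancel (assoc A B (C ⊗ D)) (assoc_inv _ _ _)); [apply assocK|].
  apply (split_epi_cancel (assoc A (B ⊗ C) D) (assoc_inv _ _ _)); [apply assoc_invK|].
  apply (split_epi_cancel (assoc A B C ⊗m idm D) (assoc_inv A B C ⊗m idm D)).
  { rewrite comp_tmor, assoc_invK, comp1f, tmor_idm; reflexivity. }
  normA. rewrite assoc_invK, comp1f. rw (pentagonA A B C D).
  rw (assocK A (B ⊗ C) D). rewrite compf1.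
  rw (comp_tmor (assoc A B C) (assoc_inv A B C) (idm D) (idm D)).
  rewrite assocK, comp1f, tmor_idm, compf1. reflexivity.
Qed.

Lemma pentagon_inv_r (A B C D : ob K) :
  assoc_inv A (B ⊗ C) D ∘ idm A ⊗m assoc_inv B C D ∘ assoc A B (C ⊗ D) =
  assoc A B C ⊗m idm D ∘ assoc_inv (A ⊗ B) C D.
Proof.
  apply (split_epi_cancel (assoc (A ⊗ B) C D) (assoc_inv _ _ _)); [apply assoc_invK|].
  apply (split_mono_cancel (assoc A (B ⊗ C) D) (assoc_inv _ _ _)); [apply assocK|].
  apply (split_mono_cancel (idm A ⊗m assoc B C D) (idm A ⊗m assoc_inv B C D)).
  { rewrite comp_tmor, assocK, comp1f, tmor_idm; reflexivity. }
  normA. rw (assoc_invK A (B ⊗ C) D). rewrite compf1.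
  rw (comp_tmor (idm A) (idm A) (assoc_inv B C D) (assoc B C D)).
  rewrite assoc_invK, comp1f, tmor_idm, comp1f. rw (assocK (A ⊗ B) C D). rewrite compf1.
  rewrite pentagonA. reflexivity.
Qed.

Lemma triangle_lunit (A B : ob K) : idm A ⊗m lunit B ∘ assoc A I B = runit A ⊗m idm B.
Proof. apply triangle. Qed.

Lemma triangle_inv (A B : ob K) :
  runit A ⊗m idm B ∘ assoc_inv A I B = idm A ⊗m lunit B.
Proof. rewrite <- triangle_lunit, <- compA, assoc_invK, compf1; reflexivity. Qed.

Lemma tmor_unit_r_inj {A B : ob K} (f g : hom A B) : f ⊗m idm I = g ⊗m idm I -> f = g.
Proof.
  intros e. apply (split_epi_cancel (runit A) (runit_inv A)); [apply runit_iso2|].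
  rewrite <- !runit_natural, e. reflexivity.
Qed.

Lemma tmor_unit_l_inj {A B : ob K} (f g : hom A B) : idm I ⊗m f = idm I ⊗m g -> f = g.
Proof.
  intros e. apply (split_epi_cancel (lunit A) (lunit_inv A)); [apply lunit_iso2|].
  rewrite <- !lunit_natural, e. reflexivity.
Qed.

Lemma runit_tensor (X Y : ob K) : runit (X ⊗ Y) = idm X ⊗m runit Y ∘ assoc X Y I.
Proof.
  apply tmor_unit_r_inj.
  apply (split_mono_cancel (assoc X Y I) (assoc_inv _ _ _)); [apply assocK|].
  rewrite <- triangle_lunit, <- tmor_idm. rw (assoc_natural (idm X) (idm Y) (lunit I)).
  rw (pentagon K X Y I I).
  rw (comp_tmor (idm X) (idm X) (assoc Y I I) (idm Y ⊗m lunit I)).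
  rewrite triangle_lunit, comp1f. rwr (assoc_natural (idm X) (runit Y) (idm I)).
  rw (comp_tmor (assoc X Y I) (idm X ⊗m runit Y) (idm I) (idm I)). rewrite comp1f.
  reflexivity.
Qed.

Lemma runit_tensor_inv (X Y : ob K) :
  runit (X ⊗ Y) ∘ assoc_inv X Y I = idm X ⊗m runit Y.
Proof. rewrite runit_tensor, <- compA, assoc_invK, compf1; reflexivity. Qed.

Lemma lunit_tensor (A B : ob K) : lunit (A ⊗ B) ∘ assoc I A B = lunit A ⊗m idm B.
Proof.
  apply tmor_unit_l_inj.
  apply (split_epi_cancel (assoc I (I ⊗ A) B ∘ assoc I I A ⊗m idm B)
                          (assoc_inv I I A ⊗m idm B ∘ assoc_inv I (I ⊗ A) B)).
  { rw (comp_tmor (assoc_inv I I A) (assoc I I A) (idm B) (idm B)).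
    rewrite assoc_invK, comp1f, tmor_idm, compf1, assoc_invK. reflexivity. }
  rewrite tmor1_comp. normA. rwr (pentagonA I I A B). rw (triangle_lunit I (A ⊗ B)).
  rewrite <- (tmor_idm A B). rwr (assoc_natural (runit I) (idm A) (idm B)).
  rewrite <- triangle_lunit, tmor_comp1. rw (assoc_natural (idm I) (lunit A) (idm B)).
  reflexivity.
Qed.

Lemma hexagon_inv (A B C : ob K) :
  assoc_inv C A B ∘ braid (A ⊗ B) C ∘ assoc_inv A B C =
  braid A C ⊗m idm B ∘ assoc_inv A C B ∘ idm A ⊗m braid B C.
Proof. pose proof (hexagon2 K A B C) as h. rewrite !compA in h. exact h. Qed.

Lemma braid_tensor_l (A B C : ob K) :
  braid (A ⊗ B) C =
  assoc C A B ∘ braid A C ⊗m idm B ∘ assoc_inv A C B ∘ idm A ⊗m braid B C ∘ assoc A B C.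
Proof.
  rwr (hexagon_inv A B C). rewrite assoc_invK, comp1f, <- compA, assocK, compf1.
  reflexivity.
Qed.

Lemma runit_braid_unit (X : ob K) : runit X ∘ braid I X = lunit X.
Proof.
  apply tmor_unit_l_inj.
  apply (split_mono_cancel (braid I X) (braid_inv I X)); [apply braid_iso1|].
  rewrite tmor1_comp. rwr (runit_tensor_inv I X). rwr (runit_natural (braid I X)).
  rwr (hexagon_inv I I X). rw (runit_tensor_inv X I).
  rwr (braid_natural (runit I) (idm X)). rw (triangle_inv I X). reflexivity.
Qed.

Lemma braid_unit_l (X : ob K) : braid I X = runit_inv X ∘ lunit X.
Proof. rewrite <- runit_braid_unit, compA, runit_iso1, comp1f. reflexivity. Qed.

End Coherence.

Definition convolution {K : BraidedMonoidalCategory} {C H : ob K}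
    (m : hom (H ⊗ H) H) (Δ : hom C (C ⊗ C)) (φ ψ : hom C H) : hom C H :=
  m ∘ (φ ⊗m ψ) ∘ Δ.

Lemma convolution_inverse_comp {K : BraidedMonoidalCategory} {C H : ob K}
    (m : hom (H ⊗ H) H) (u : hom unit H) (ΔC : hom C (C ⊗ C)) (εC : hom C unit)
    (ΔH : hom H (H ⊗ H)) (εH : hom H unit) (z : hom C H) (f g : hom H H) :
  is_coalgebra_morphism ΔC εC ΔH εH z -> convolution m ΔH f g = u ∘ εH ->
  convolution m ΔC (f ∘ z) (g ∘ z) = u ∘ εC.
Proof.
  unfold convolution. intros [z_comul z_counit] fg.
  rewrite <- comp_tmor. normA. rwr z_comul. rw fg. rw z_counit. reflexivity.
Qed.

Section ConvolutionAction.
Context {K : BraidedMonoidalCategory}.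
Notation I := (@unit K).
Context {H : ob K} (m : hom (H ⊗ H) H) {u : hom I H}.

Definition braided_lmul (X : ob K) : hom (H ⊗ (X ⊗ H)) (X ⊗ H) :=
  (idm X ⊗m m) ∘ assoc X H H ∘ (braid H X ⊗m idm H) ∘ assoc_inv H X H.

Hypothesis mulA : m ∘ (m ⊗m idm H) = m ∘ (idm H ⊗m m) ∘ assoc H H H.
Hypothesis mul1m : m ∘ (u ⊗m idm H) = lunit H.

Lemma braided_lmulA (X : ob K) :
  braided_lmul X ∘ (idm H ⊗m braided_lmul X) ∘ assoc H H (X ⊗ H) =
  braided_lmul X ∘ (m ⊗m idm (X ⊗ H)).
Proof.
  unfold braided_lmul. normA. rewrite !tmor1_comp. normA.
  rw (assoc_inv_natural (idm H) (idm X) m). rewrite (tmor_idm H X).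
  rw (tmor_interchange (braid H X) m). rewrite <- (tmor_idm X H).
  rw (assoc_natural (idm X) (idm H) m).
  rwr (tmor1_comp (B:=X) (idm H ⊗m m) m).
  rw (assoc_inv_natural m (idm X) (idm H)).
  rwr (tmor_comp1 (B:=H) (m ⊗m idm X) (braid H X)). rewrite (braid_natural m (idm X)).
  rewrite (tmor_comp1 (B:=H) (braid (H ⊗ H) X) (idm X ⊗m m)).
  rw (assoc_natural (idm X) m (idm H)). rwr (tmor1_comp (B:=X) (m ⊗m idm H) m).
  rewrite mulA, (tmor1_comp (B:=X) (assoc H H H) (m ∘ idm H ⊗m m)).
  rewrite (braid_tensor_l H H X), !tmor_comp1. normA.
  rwr (pentagonA X H H H). rw (assoc_natural (braid H X) (idm H) (idm H)).
  rewrite (tmor_idm H H).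
  rw (pentagon_inv_l H X H H). rw (assoc_inv_natural (idm H) (braid H X) (idm H)).
  rw (pentagon_inv_r H H X H).
  reflexivity.
Qed.

Lemma braided_lmul1 (X : ob K) :
  braided_lmul X ∘ (u ⊗m idm (X ⊗ H)) ∘ lunit_inv (X ⊗ H) = idm (X ⊗ H).
Proof.
  unfold braided_lmul. rewrite <- (tmor_idm X H). normA.
  rw (assoc_inv_natural u (idm X) (idm H)).
  rwr (tmor_comp1 (B:=H) (u ⊗m idm X) (braid H X)).
  rewrite (braid_natural u (idm X)), braid_unit_l.
  rewrite (tmor_comp1 (B:=H) (runit_inv X ∘ lunit X) (idm X ⊗m u)).
  rewrite (tmor_comp1 (B:=H) (lunit X) (runit_inv X)). normA.
  rw (assoc_natural (idm X) u (idm H)). rwr (tmor1_comp (B:=X) (u ⊗m idm H) m).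
  rewrite mul1m. rw (triangle_lunit X H).
  rwr (tmor_comp1 (B:=H) (runit_inv X) (runit X)).
  rewrite runit_iso2, tmor_idm, comp1f.
  rwr (lunit_tensor X H). rw (assoc_invK I X H). rewrite compf1, lunit_iso2.
  reflexivity.
Qed.

Context {C : ob K} (ΔC : hom C (C ⊗ C)) {εC : hom C I}.

Definition conv_act (X : ob K) (φ : hom C H) (f : hom C (X ⊗ H)) : hom C (X ⊗ H) :=
  braided_lmul X ∘ (φ ⊗m f) ∘ ΔC.

Hypothesis coassoc : assoc C C C ∘ (ΔC ⊗m idm C) ∘ ΔC = (idm C ⊗m ΔC) ∘ ΔC.
Hypothesis counit_l : lunit C ∘ (εC ⊗m idm C) ∘ ΔC = idm C.

Lemma conv_actM (X : ob K) (φ ψ : hom C H) (f : hom C (X ⊗ H)) :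
  conv_act X φ (conv_act X ψ f) = conv_act X (convolution m ΔC φ ψ) f.
Proof.
  unfold conv_act, convolution.
  rewrite (tmor_compr φ (braided_lmul X ∘ ψ ⊗m f) ΔC).
  rewrite (tmor_compr' φ (braided_lmul X) (ψ ⊗m f)). normA.
  rwr coassoc. rwr (assoc_natural φ ψ f). rw (braided_lmulA X).
  assert (conv_tmor : (m ∘ φ ⊗m ψ ∘ ΔC) ⊗m f =
                      m ⊗m idm (X ⊗ H) ∘ (φ ⊗m ψ) ⊗m f ∘ ΔC ⊗m idm C).
  { rewrite !comp_tmor, !comp1f, !compf1. reflexivity. }
  rewrite conv_tmor. normA. reflexivity.
Qed.

Lemma counit_l_lunit_inv : εC ⊗m idm C ∘ ΔC = lunit_inv C.
Proof.
  rewrite <- (comp1f (εC ⊗m idm C ∘ ΔC)), <- (lunit_iso1 K C), <- !compA,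
    (compA (lunit C)), counit_l, compf1.
  reflexivity.
Qed.

Lemma conv_act1 (X : ob K) (f : hom C (X ⊗ H)) : conv_act X (u ∘ εC) f = f.
Proof.
  unfold conv_act. rewrite (tmor_split (u ∘ εC) f), (tmor_comp1 εC u). normA.
  rw counit_l_lunit_inv. rwr (tmor_interchange u f). rw (lunit_inv_natural f).
  rewrite braided_lmul1, comp1f. reflexivity.
Qed.

Lemma conv_act_inverse_iff (X : ob K) (φ ψ : hom C H) (f g : hom C (X ⊗ H)) :
  convolution m ΔC φ ψ = u ∘ εC -> convolution m ΔC ψ φ = u ∘ εC ->
  f = conv_act X ψ g <-> conv_act X φ f = g.
Proof.
  intros φψ ψφ. split; intros E.
  - rewrite E, conv_actM, φψ, conv_act1. reflexivity.
  - rewrite <- E, conv_actM, ψφ, conv_act1. reflexivity.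
Qed.

End ConvolutionAction.

Lemma coadjoint_coaction_conv_act {K : BraidedMonoidalCategory} {H C : ob K}
    (m : hom (H ⊗ H) H) (S : hom H H) (ΔC : hom C (C ⊗ C)) (z : hom C H) :
  coadjoint_coaction ΔC m S z = conv_act m ΔC C (S ∘ z) (idm C ⊗m z ∘ ΔC).
Proof.
  unfold coadjoint_coaction, conv_act, braided_lmul. normA.
  rewrite (tmor_compr (S ∘ z) (idm C ⊗m z) ΔC). normA.
  rw (assoc_inv_natural (S ∘ z) (idm C) z).
  rwr (assoc_natural (idm C) S (idm H)).
  rw (comp_tmor (braid H C) (idm C ⊗m S) (idm H) (idm H)). rewrite comp1f.
  rwr (braid_natural S (idm C)).
  rw (comp_tmor (z ⊗m idm C) (braid H C ∘ S ⊗m idm C) z (idm H)).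
  rw (comp_tmor ((S ∘ z) ⊗m idm C) (braid H C) z (idm H)).
  rw (comp_tmor z S (idm C) (idm C)). rewrite !comp1f. reflexivity.
Qed.

Theorem lemma2p13 (𝒜 : BraidedMonoidalCategory)
    (H : ob 𝒜) (m : hom (H ⊗ H) H) (u : hom unit H)
    (ΔH : hom H (H ⊗ H)) (εH : hom H unit) (S : hom H H)
    (hH : is_Hopf m u ΔH εH S)
    (C : ob 𝒜) (ΔC : hom C (C ⊗ C)) (εC : hom C unit)
    (hC : is_coalgebra ΔC εC)
    (z : hom C H) (hz : is_coalgebra_morphism ΔC εC ΔH εH z)
    (ad : hom C (C ⊗ H)) (had : is_right_coaction ΔH εH ad) :
  ad = coadjoint_coaction ΔC m S z <->
  (idm C ⊗m m) ∘ assoc C H H ∘ (braid H C ⊗m idm H) ∘ assoc_inv H C H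
    ∘ (z ⊗m ad) ∘ ΔC
  = (idm C ⊗m z) ∘ ΔC.
Proof.
  destruct hH as [[[mulA [mul1m _]] _] [antipode_l antipode_r]].
  destruct hC as [coassoc [counit_l _]].
  pose proof (convolution_inverse_comp m u ΔC εC ΔH εH z S (idm H) hz antipode_l)
    as Sz_z.
  pose proof (convolution_inverse_comp m u ΔC εC ΔH εH z (idm H) S hz antipode_r)
    as z_Sz.
  rewrite comp1f in Sz_z, z_Sz.
  rewrite coadjoint_coaction_conv_act.
  (* The right-hand side is [conv_act m ΔC C z ad = (idm C ⊗m z) ∘ ΔC] up to unfolding. *)
  exact (conv_act_inverse_iff m mulA mul1m ΔC coassoc counit_l C z (S ∘ z) ad _ z_Sz Sz_z).
Qed.
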